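(* Let $K$ be a field with a non-archimedean absolute value $v$, let $\mathbb{C}_v$ be the completion of an algebraic closure of $K$, and let $\phi(z)\in K[z]$ be a polynomial of degree $d\geq 2$ with lead coefficient $a_d$. Let $\mathfrak{K}_v\subseteq\mathbb{C}_v$ be the filled Julia set of $\phi$ at $v$, let $r_v=\sup\{|x-y|_v : x,y\in\mathfrak{K}_v\}$ be its diameter, and let $U_0\subseteq\mathbb{C}_v$ be the intersection of all disks containing $\mathfrak{K}_v$. Then: (1) $U_0=\bar{D}(x,r_v)$ for any $x\in\mathfrak{K}_v$; (2) there exists $x\in\mathbb{C}_v$ such that $|x|_v=r_v$; (3) $r_v\geq|a_d|_v^{-1/(d-1)}$, with equality if and only if $\mathfrak{K}_v=U_0$; (4) if $r_v>|a_d|_v^{-1/(d-1)}$, let $\alpha\in U_0$ and let $\beta_1,\ldots,\beta_d\in\mathbb{C}_v$ be the roots of $\phi(z)=\alpha$; then $\mathfrak{K}_v\subseteq U_1$, where $U_1=\bigcup_{i=1}^d\bar{D}(\beta_i,|a_d|_v^{-1/(d-1)})$.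
   Context: The filled Julia set of $\phi$ at $v$ is $\mathfrak{K}_v=\{x\in\mathbb{C}_v : \{|\phi^n(x)|_v:n\geq 0\}\text{ is bounded}\}$, where $\phi^n$ is the $n$-th iterate of $\phi$. For $x\in\mathbb{C}_v$ and $r>0$, $\bar{D}(x,r)=\{y\in\mathbb{C}_v:|y-x|_v\leq r\}$ is the closed disk. *)

From mathcomp Require Import all_boot all_order all_algebra.
From mathcomp Require Import all_classical all_reals all_analysis.
Import Order.TTheory GRing.Theory Num.Theory.
Set Implicit Arguments.
Unset Strict Implicit.
Unset Printing Implicit Defensive.
Local Open Scope ring_scope.
Local Open Scope classical_set_scope.

Definition is_na_abs (R : realType) (L : fieldType) (abs : L -> R) : Prop :=
  (forall x, 0 <= abs x) /\ (forall x, abs x = 0 <-> x = 0) /\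
  (forall x y, abs (x * y) = abs x * abs y) /\
  (forall x y, abs (x + y) <= Num.max (abs x) (abs y)).

Definition abs_complete (R : realType) (L : fieldType) (abs : L -> R) : Prop :=
  forall u : nat -> L,
    (forall e, 0 < e -> exists N, forall m n, (N <= m)%N -> (N <= n)%N ->
        abs (u m - u n) < e) ->
    exists l, forall e, 0 < e -> exists N, forall n, (N <= n)%N -> abs (u n - l) < e.

Definition alg_dense (R : realType) (K : fieldType) (L : fieldType)
  (iota : {rmorphism K -> L}) (abs : L -> R) : Prop :=
  forall x e, 0 < e -> exists y,
    (exists p : {poly K}, p != 0 /\ root (map_poly iota p) y) /\ abs (x - y) < e.

Definition cdisk (R : realType) (L : fieldType) (abs : L -> R) (a : L) (r : R) : set L :=
  [set y | abs (y - a) <= r].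

Definition filled_julia (R : realType) (L : fieldType) (abs : L -> R) (f : {poly L}) : set L :=
  [set x | exists M : R, forall n : nat, abs (iter n (fun z => f.[z]) x) <= M].

Definition diam (R : realType) (L : fieldType) (abs : L -> R) (S : set L) : R :=
  sup [set t | exists x y, S x /\ S y /\ t = abs (x - y)].

Definition disk_hull (R : realType) (L : fieldType) (abs : L -> R) (S : set L) : set L :=
  [set z | forall a r, 0 < r -> S `<=` cdisk abs a r -> cdisk abs a r z].

(* Pick a fixed point x0 of f and let m be the largest distance from x0 to a
   solution of f(z) = x0.  By the ultrametric inequality, |f(z) - x0| =
   |a_d| |z - x0|^d as soon as |z - x0| > m, so orbits starting farther than
   r := max(m, rho) from x0 escape, where |a_d| rho^(d-1) = 1.  The radius r
   is attained in the filled Julia set: by a preimage of x0 when m > rho, and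
   otherwise because D(x0, rho) is then f-invariant.  Hence r is the diameter
   and the hull is D(x, r) for any x in the set.  When r > rho, a point of
   D(x0, r) whose image is at distance |a_d| r^d > r from x0 escapes; and
   since the set is f-invariant and lies in D(alpha, r), factoring f - alpha
   shows that no point of it is farther than rho from all solutions of
   f(z) = alpha. *)

From mathcomp Require Import all_boot all_order all_algebra.
From mathcomp Require Import all_classical all_reals all_analysis.
From mathcomp Require Import lra.
Import Order.TTheory GRing.Theory Num.Theory.
Local Open Scope ring_scope.
Local Open Scope classical_set_scope.
Set Implicit Arguments.
Unset Strict Implicit.

Section NonArchimedeanAbs.
Context {R : realType} {L : fieldType} {abs : L -> R} (habs : is_na_abs abs).

Lemma abs_ge0 x : 0 <= abs x.
Proof. by case: habs. Qed.

Lemma absM x y : abs (x * y) = abs x * abs y.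
Proof. by case: habs => _ [_ []]. Qed.

Lemma abs_max x y : abs (x + y) <= Num.max (abs x) (abs y).
Proof. by case: habs => _ [_ []]. Qed.

Lemma abs_gt0 x : x != 0 -> 0 < abs x.
Proof.
move=> x0; rewrite lt_neqAle abs_ge0 andbT eq_sym.
by apply: contra x0 => /eqP ax0; apply/eqP; case: habs => _ [/(_ x) [+ _] _]; apply.
Qed.

Lemma abs1 : abs 1 = 1.
Proof.
have := absM 1 1; rewrite mulr1 => h.
have := abs_gt0 (oner_neq0 L); nra.
Qed.

Lemma absN x : abs (- x) = abs x.
Proof.
have := absM (-1) (-1); rewrite mulrNN mulr1 abs1 => h.
have absN1 : abs (-1) = 1 by have := abs_ge0 (-1); nra.
by rewrite -mulN1r absM absN1 mul1r.
Qed.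

Lemma abs_distC x y : abs (x - y) = abs (y - x).
Proof. by rewrite -opprB absN. Qed.

Lemma abs_dist_trans r x y z :
  abs (x - y) <= r -> abs (y - z) <= r -> abs (x - z) <= r.
Proof.
move=> xy yz; have := abs_max (x - y) (y - z).
by rewrite addrA subrK => /le_trans; apply; rewrite ge_max xy yz.
Qed.

Lemma abs_subr_lt x y : abs y < abs x -> abs (x - y) = abs x.
Proof.
move=> yx; apply/eqP; rewrite eq_le; apply/andP; split.
  by apply: le_trans (abs_max _ _) _; rewrite absN ge_max lexx ltW.
have := abs_max (x - y) y; rewrite subrK le_max => /orP[//|xy].
by have := lt_le_trans yx xy; rewrite ltxx.
Qed.

Lemma absX x n : abs (x ^+ n) = abs x ^+ n.
Proof. by elim: n => [|n IH]; rewrite ?abs1 // !exprS absM IH. Qed.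

Lemma abs_prod (s : seq L) (F : L -> L) :
  abs (\prod_(b <- s) F b) = \prod_(b <- s) abs (F b).
Proof. exact: (big_morph abs absM abs1). Qed.

Section FilledJulia.
Context {f : {poly L}}.
Local Notation KJ := (filled_julia abs f).

Lemma filled_julia_horner x : KJ x <-> KJ f.[x].
Proof.
split=> [[M bdM]|[M bdM]]; last first.
  by exists (Num.max M (abs x)) => -[|n]; rewrite ?iterSr le_max ?bdM ?lexx ?orbT.
by exists M => n; rewrite -iterSr; apply: bdM.
Qed.

Lemma filled_julia_fixed x : f.[x] = x -> KJ x.
Proof.
move=> fx; exists (abs x) => n.
by have -> : iter n (horner f) x = x by elim: n => //= n ->.
Qed.

Lemma filled_juliaP x z :
  KJ z <-> exists M, forall n, abs (iter n (horner f) z - x) <= M.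
Proof.
split=> -[M bdM].
  exists (Num.max M (abs x)) => n; apply: le_trans (abs_max _ _) _.
  by rewrite absN ge_max !le_max bdM lexx orbT.
exists (Num.max M (abs x)) => n; rewrite -(subrK x (iter n _ z)).
by apply: le_trans (abs_max _ _) _; rewrite ge_max !le_max bdM lexx orbT.
Qed.

End FilledJulia.

Lemma diam_attained (S : set L) r x y :
  (forall u v, S u -> S v -> abs (u - v) <= r) -> S x -> S y -> abs (x - y) = r ->
  diam abs S = r.
Proof.
move=> Sr Sx Sy xyr; rewrite /diam.
set D := [set t | _]; have Dr : D r by exists x, y.
apply/eqP; rewrite eq_le; apply/andP; split.
  by apply: ge_sup; [exists r | move=> t [u [v [Su [Sv ->]]]]; apply: Sr].
apply: (sup_upper_bound _ Dr); split; first by exists r.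
by exists r => t [u [v [Su [Sv ->]]]]; apply: Sr.
Qed.

Lemma disk_hull_attained (S : set L) r x y z : 0 < r ->
  (forall u v, S u -> S v -> abs (u - v) <= r) -> S x -> S y -> abs (x - y) = r ->
  S z -> disk_hull abs S = cdisk abs z r.
Proof.
move=> r_gt0 Sr Sx Sy xyr Sz; apply/seteqP; split=> w.
  by apply; rewrite // => u Su; apply: Sr.
move=> wz b s s_gt0 Ss; have rs : r <= s.
  by rewrite -xyr; apply: abs_dist_trans (Ss _ Sx) _; rewrite abs_distC; apply: Ss.
exact: abs_dist_trans (le_trans wz rs) (Ss _ Sz).
Qed.

End NonArchimedeanAbs.

Lemma prodr_const_seq (R : pzSemiRingType) (T : Type) (s : seq T) (c : R) :
  \prod_(b <- s) c = c ^+ size s.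
Proof. by rewrite big_const_seq count_predT -Monoid.iteropE. Qed.

Lemma prodr_seq_gt (R : numDomainType) (T : eqType) (s : seq T) (F : T -> R) c :
  0 <= c -> s != [::] -> (forall b, b \in s -> c < F b) -> c ^+ size s < \prod_(b <- s) F b.
Proof.
move=> c_ge0 s0 cF; rewrite -prodr_const_seq big_seq [ltRHS]big_seq.
apply: ltr_prod => [|b bs]; last by rewrite c_ge0 cF.
by case: s s0 {cF} => // b s _; rewrite /= mem_head.
Qed.

Lemma seq_max_attained (R : realDomainType) (T : eqType) (s : seq T) (F : T -> R) :
  s != [::] -> exists2 b, b \in s & forall c, c \in s -> F c <= F b.
Proof.
elim: s => // x [|y s] IH _.
  by exists x => [|c]; rewrite ?mem_head // inE => /eqP ->.
have [b bs bmax] := IH isT.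
have [Fxb|Fbx] := leP (F x) (F b).
  exists b => [|c]; first by rewrite inE bs orbT.
  by rewrite inE => /predU1P[->|/bmax].
exists x => [|c]; first exact: mem_head.
by rewrite inE => /predU1P[->//|/bmax/le_trans]; apply; apply: ltW.
Qed.

Lemma unbounded_linear_growth (R : archiRealFieldType) (u : nat -> R) e :
  0 < e -> (forall n, u n + e <= u n.+1) -> forall M, exists n, M < u n.
Proof.
move=> e_gt0 ue M.
have lin n : u 0%N + n%:R * e <= u n.
  elim: n => [|n IH]; first by rewrite mul0r addr0.
  by rewrite -natr1 mulrDl mul1r addrA; apply: le_trans (ue n); rewrite lerD2r.
have := archi_boundP (normr_ge0 ((M - u 0%N) / e)).
set n := Num.Def.archi_bound _ => /(le_lt_trans (ler_norm _)) Mn; exists n.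
by move: Mn; rewrite ltr_pdivrMr // ltrBlDl => /lt_le_trans; apply; apply: lin.
Qed.

Lemma mul_powR_inv_expn (R : realType) (x : R) n : 0 < x -> (0 < n)%N ->
  x * (x `^ (- n%:R^-1)) ^+ n = 1.
Proof.
move=> x_gt0 n_gt0; rewrite -powR_mulrn ?powR_ge0 // -powRrM mulNr mulVf ?pnatr_eq0 -?lt0n //.
by rewrite powR_inv1 ?ltW // mulfV ?lt0r_neq0.
Qed.

Definition fiber_seq (F : fieldType) (f : {poly F}) (c : F) (rs : seq F) :=
  forall z, f.[z] - c = lead_coef f * \prod_(b <- rs) (z - b).

Lemma fiber_seq_root (F : fieldType) (f : {poly F}) c rs b :
  fiber_seq f c rs -> b \in rs -> f.[b] = c.
Proof.
move=> fc brs; apply/eqP; rewrite -subr_eq0 fc (big_rem b brs) /=.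
by rewrite subrr mul0r mulr0.
Qed.

Lemma fiber_seq_exists (F : closedFieldType) (f : {poly F}) c d :
  (0 < d)%N -> size f = d.+1 -> exists2 rs, size rs = d & fiber_seq f c rs.
Proof.
move=> d_gt0 fd.
have small : (size (- c%:P) < size f)%N.
  by rewrite size_polyN fd ltnS (leq_trans (size_polyC_leq1 _)).
have [rs fE] := closed_field_poly_normal (f - c%:P); rewrite lead_coefDl // in fE.
exists rs.
  have : size (f - c%:P) = d.+1 by rewrite size_polyDl.
  by rewrite fE size_scale ?size_prod_XsubC => [[]|]; rewrite // lead_coef_eq0 -size_poly_eq0 fd.
move=> z; have := congr1 (horner^~ z) fE.
rewrite /= hornerZ horner_prod hornerD hornerN hornerC => ->.
by congr (_ * _); apply: eq_bigr => b _; rewrite hornerXsubC.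
Qed.

Section PolynomialDynamics.
Context {R : realType} {L : closedFieldType} {abs : L -> R} (habs : is_na_abs abs).
Context {f : {poly L}} {d : nat} {rho : R}.
Hypotheses (d_ge2 : (2 <= d)%N) (size_f : size f = d.+1) (rho_gt0 : 0 < rho).
Hypothesis lead_rho : abs (lead_coef f) * rho ^+ (d - 1) = 1.

Local Notation a := (lead_coef f).
Local Notation KJ := (filled_julia abs f).

Lemma abs_lead_gt0 : 0 < abs a.
Proof. by apply: (abs_gt0 habs); rewrite lead_coef_eq0 -size_poly_eq0 size_f. Qed.

Lemma abs_lead_mulXn t : abs a * t ^+ d = t * (abs a * t ^+ (d - 1)).
Proof. by rewrite mulrCA -exprS subn1 prednK // ltnW. Qed.

Lemma abs_lead_expn_gt1 t : rho < t -> 1 < abs a * t ^+ (d - 1).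
Proof.
move=> rt; rewrite -lead_rho ltr_pM2l ?abs_lead_gt0 // ltrXn2r ?(ltW rho_gt0) //.
by rewrite subn_eq0 -ltnNge.
Qed.

Lemma lt_abs_lead_expn t : rho < t -> t < abs a * t ^+ d.
Proof.
move=> rt; rewrite abs_lead_mulXn -[ltLHS]mulr1 ltr_pM2l ?abs_lead_expn_gt1 //.
exact: lt_trans rt.
Qed.

Lemma abs_horner_fiber c rs z : fiber_seq f c rs ->
  abs (f.[z] - c) = abs a * \prod_(b <- rs) abs (z - b).
Proof. by move->; rewrite (absM habs) (abs_prod habs). Qed.

Lemma abs_horner_fiber_far c rs x z : fiber_seq f c rs -> size rs = d ->
  (forall b, b \in rs -> abs (b - x) < abs (z - x)) ->
  abs (f.[z] - c) = abs a * abs (z - x) ^+ d.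
Proof.
move=> fc <- far; rewrite (abs_horner_fiber _ fc) -prodr_const_seq.
congr (_ * _); apply: eq_big_seq => b brs.
have -> : z - b = (z - x) - (b - x) by rewrite opprB addrA subrK.
exact: (abs_subr_lt habs (far b brs)).
Qed.

Lemma abs_horner_fiber_near c rs x z : fiber_seq f c rs -> size rs = d ->
  (forall b, b \in rs -> abs (b - x) <= rho) -> abs (z - x) <= rho ->
  abs (f.[z] - c) <= rho.
Proof.
move=> fc rsd near zx; rewrite (abs_horner_fiber _ fc).
apply: (@le_trans _ _ (abs a * rho ^+ d)); last by rewrite abs_lead_mulXn lead_rho mulr1.
rewrite ler_pM2l ?abs_lead_gt0 // -rsd -prodr_const_seq big_seq [leRHS]big_seq.
apply: ler_prod => b brs; rewrite abs_ge0 //=.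
by apply: (abs_dist_trans habs zx); rewrite (abs_distC habs); apply: near.
Qed.

Lemma abs_horner_fiber_gt c rs z b1 : fiber_seq f c rs -> size rs = d -> b1 \in rs ->
  (forall b, b \in rs -> rho < abs (z - b)) -> abs (z - b1) < abs (f.[z] - c).
Proof.
move=> fc rsd b1rs far; rewrite (abs_horner_fiber _ fc) (big_rem b1 b1rs) /= mulrCA.
rewrite -[ltLHS]mulr1 ltr_pM2l; last exact: lt_trans rho_gt0 (far _ b1rs).
have rem_size : size (rem b1 rs) = (d - 1)%N by rewrite size_rem // rsd subn1.
apply: (@le_lt_trans _ _ (abs a * rho ^+ (d - 1))); first by rewrite lead_rho.
rewrite ltr_pM2l ?abs_lead_gt0 // -rem_size prodr_seq_gt ?(ltW rho_gt0) //.
  by rewrite -size_eq0 rem_size subn_eq0 -ltnNge.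
by move=> b /mem_rem; apply: far.
Qed.

Lemma exists_fixed_point : exists x0, f.[x0] = x0.
Proof.
have : size (f - 'X) != 1%N.
  by rewrite size_polyDl ?size_polyN ?size_polyX size_f ?ltnS // eqSS -lt0n ltnW.
case/closed_rootP => x /rootP; rewrite hornerD hornerN hornerX => /eqP.
by rewrite subr_eq0 => /eqP; exists x.
Qed.

Lemma exists_abs_eq_rho : exists w, abs w = rho.
Proof.
have : size ('X^(d - 1) - (a^-1)%:P) != 1%N.
  by rewrite size_XnsubC ?subn_gt0 // eqSS subn_eq0 -ltnNge.
case/closed_rootP => w /rootP; rewrite hornerD hornerN hornerXn hornerC => /eqP.
rewrite subr_eq0 => /eqP wa; exists w.
have a0 : a != 0 by rewrite lead_coef_eq0 -size_poly_eq0 size_f.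
have : abs a * abs w ^+ (d - 1) = abs a * rho ^+ (d - 1).
  by rewrite lead_rho -(absX habs) -(absM habs) wa mulfV // (abs1 habs).
move/(mulfI (lt0r_neq0 abs_lead_gt0))/eqP.
by rewrite eqrXn2 ?subn_gt0 ?(abs_ge0 habs) ?(ltW rho_gt0) // => /eqP.
Qed.

Section FixedPoint.
Context {x0 g0 : L} {gs : seq L}.
Hypotheses (fix_x0 : f.[x0] = x0) (fiber_gs : fiber_seq f x0 gs) (size_gs : size gs = d).
Hypotheses (g0_gs : g0 \in gs) (g0_max : forall g, g \in gs -> abs (g - x0) <= abs (g0 - x0)).

Local Notation m := (abs (g0 - x0)).

Lemma filled_julia_g0 : KJ g0.
Proof.
apply/filled_julia_horner; rewrite (fiber_seq_root fiber_gs g0_gs).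
exact: filled_julia_fixed.
Qed.

Lemma abs_horner_far z : m < abs (z - x0) ->
  abs (f.[z] - x0) = abs a * abs (z - x0) ^+ d.
Proof.
by move=> mz; apply: abs_horner_fiber_far fiber_gs size_gs _ => g /g0_max/le_lt_trans; apply.
Qed.

Lemma horner_dist_step t w : Num.max m rho < t -> t <= abs (w - x0) ->
  abs (w - x0) + (abs a * t ^+ (d - 1) - 1) * t <= abs (f.[w] - x0).
Proof.
rewrite gt_max => /andP[mt rt] tw.
rewrite abs_horner_far ?(lt_le_trans mt) // abs_lead_mulXn.
have t_gt0 : 0 < t := lt_trans rho_gt0 rt.
have := abs_lead_expn_gt1 rt.
have : abs a * t ^+ (d - 1) <= abs a * abs (w - x0) ^+ (d - 1).
  by rewrite ler_pM2l ?abs_lead_gt0 // lerXn2r // nnegrE ?(abs_ge0 habs) ?ltW.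
nra.
Qed.

Lemma filled_julia_sub_cdisk : KJ `<=` cdisk abs x0 (Num.max m rho).
Proof.
move=> z /(filled_juliaP habs x0) [M bdM]; rewrite /cdisk /= leNgt; apply/negP => far.
set t := abs (z - x0) in far; set u := fun n => abs (iter n (horner f) z - x0).
set e := (abs a * t ^+ (d - 1) - 1) * t.
have e_gt0 : 0 < e.
  move: far; rewrite gt_max => /andP[_ rt].
  by rewrite mulr_gt0 ?subr_gt0 ?abs_lead_expn_gt1 // (lt_trans rho_gt0).
have step n : t <= u n -> u n + e <= u n.+1 := horner_dist_step far.
have tu n : t <= u n.
  elim: n => [|n IH]; first exact: lexx.
  by apply: le_trans _ (step n IH); apply: le_trans IH _; rewrite lerDl ltW.
have [n Mu] := unbounded_linear_growth e_gt0 (fun n => step n (tu n)) M.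
by have := bdM n; rewrite leNgt Mu.
Qed.

Lemma filled_julia_dist_le x y : KJ x -> KJ y -> abs (x - y) <= Num.max m rho.
Proof.
move=> /filled_julia_sub_cdisk xr /filled_julia_sub_cdisk yr.
by apply: (abs_dist_trans habs xr); rewrite (abs_distC habs).
Qed.

Lemma cdisk_sub_filled_julia : m <= rho -> cdisk abs x0 rho `<=` KJ.
Proof.
move=> mr z zx; apply/(filled_juliaP habs x0); exists rho => n.
elim: n => [//|n IH]; rewrite iterS.
by apply: abs_horner_fiber_near fiber_gs size_gs _ IH => g /g0_max/le_trans; apply.
Qed.

Lemma exists_filled_julia_far : exists2 y, KJ y & abs (y - x0) = Num.max m rho.
Proof.
have [mr|rm] := leP m rho; last by exists g0; first exact: filled_julia_g0.
have [w wr] := exists_abs_eq_rho.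
have wx : abs (x0 + w - x0) = rho by rewrite addrC addKr.
by exists (x0 + w); first by apply: cdisk_sub_filled_julia; rewrite // /cdisk /= wx.
Qed.

Lemma diam_filled_julia : diam abs KJ = Num.max m rho.
Proof.
have [y KJy yx] := exists_filled_julia_far.
exact: diam_attained filled_julia_dist_le KJy (filled_julia_fixed fix_x0) yx.
Qed.

Lemma disk_hull_filled_julia x : KJ x -> disk_hull abs KJ = cdisk abs x (diam abs KJ).
Proof.
move=> KJx; have [y KJy yx] := exists_filled_julia_far.
rewrite diam_filled_julia (disk_hull_attained habs _ filled_julia_dist_le KJy _ yx KJx) //.
  by rewrite lt_max rho_gt0 orbT.
exact: filled_julia_fixed.
Qed.

Lemma filled_julia_eq_cdisk : m <= rho -> KJ = cdisk abs x0 rho.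
Proof.
move=> mr; apply/seteqP; split; last exact: cdisk_sub_filled_julia.
by move=> z /filled_julia_sub_cdisk; rewrite /cdisk /= max_r.
Qed.

Lemma cdisk_not_sub_filled_julia : rho < m -> ~ cdisk abs x0 m `<=` KJ.
Proof.
move=> rm sub.
have [zs size_zs fiber_zs] := fiber_seq_exists (x0 + a * (g0 - x0) ^+ d) (ltnW d_ge2) size_f.
have [z zs_z] : exists z, z \in zs.
  case: zs size_zs {fiber_zs} => [d0|z zs _]; last by exists z; rewrite mem_head.
  by move: d_ge2; rewrite -d0.
have fzx : abs (f.[z] - x0) = abs a * m ^+ d.
  by rewrite (fiber_seq_root fiber_zs zs_z) addrC addKr (absM habs) (absX habs).
have m_lt := lt_abs_lead_expn rm.
have zm : abs (z - x0) <= m.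
  rewrite leNgt; apply/negP => mz.
  have : abs a * m ^+ d < abs a * abs (z - x0) ^+ d.
    by rewrite ltr_pM2l ?abs_lead_gt0 // ltrXn2r ?(abs_ge0 habs) // -lt0n ltnW.
  by rewrite -(abs_horner_far mz) fzx ltxx.
have /filled_julia_horner/filled_julia_sub_cdisk := sub z zm.
by rewrite /cdisk /= fzx (max_l (ltW rm)) => /(lt_le_trans m_lt); rewrite ltxx.
Qed.

Lemma rho_le_diam : rho <= diam abs KJ.
Proof. by rewrite diam_filled_julia le_max lexx orbT. Qed.

Lemma exists_abs_eq_diam : exists x, abs x = diam abs KJ.
Proof.
by have [y _ yx] := exists_filled_julia_far; exists (y - x0); rewrite diam_filled_julia.
Qed.

Lemma diam_eq_rho_iff : diam abs KJ = rho <-> KJ = disk_hull abs KJ.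
Proof.
rewrite (disk_hull_filled_julia (filled_julia_fixed fix_x0)) diam_filled_julia.
have [mr|rm] := leP m rho; first by split=> // _; apply: filled_julia_eq_cdisk.
split=> [mr|KJE]; first by move: rm; rewrite mr ltxx.
by case: (cdisk_not_sub_filled_julia rm); rewrite -KJE.
Qed.

Lemma exists_filled_julia_at_dist z : abs (z - x0) <= m -> exists2 y, KJ y & abs (z - y) = m.
Proof.
rewrite le_eqVlt => /predU1P[zm|zm]; first by exists x0; first exact: filled_julia_fixed.
exists g0; first exact: filled_julia_g0.
have -> : z - g0 = - ((g0 - x0) - (z - x0)) by rewrite !opprB addrA subrK.
by rewrite (absN habs) (abs_subr_lt habs).
Qed.

Lemma filled_julia_sub_fiber_disks :
  rho < diam abs KJ -> forall alpha, disk_hull abs KJ alpha ->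
  KJ `<=` [set z | exists beta, root (f - alpha%:P) beta /\ abs (z - beta) <= rho].
Proof.
rewrite (disk_hull_filled_julia (filled_julia_fixed fix_x0)) diam_filled_julia.
rewrite lt_max ltxx orbF => rm alpha; have mE : Num.max m rho = m := max_l (ltW rm).
rewrite mE => am z KJz.
have [bs size_bs fb] := fiber_seq_exists alpha (ltnW d_ge2) size_f.
suff [b bbs zb] : exists2 b, b \in bs & abs (z - b) <= rho.
  by exists b; split=> //; apply/rootP; rewrite !hornerE (fiber_seq_root fb bbs) subrr.
have [/hasP//|/hasPn far] := boolP (has (fun b => abs (z - b) <= rho) bs).
have rho_lt b : b \in bs -> rho < abs (z - b) by move/far; rewrite ltNge.
have image_le y : KJ y -> abs (f.[y] - alpha) <= m.
  move/filled_julia_horner/filled_julia_sub_cdisk; rewrite /cdisk /= mE => ym.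
  by apply: (abs_dist_trans habs ym); rewrite (abs_distC habs).
(* Either z itself is mapped too far from alpha, or all solutions lie within m of z
   and a point of the set at distance m from z is. *)
have [/hasP[b1 b1bs mb1]|/hasPn near] := boolP (has (fun b => m <= abs (z - b)) bs).
  have := abs_horner_fiber_gt fb size_bs b1bs rho_lt.
  by move=> /(le_lt_trans mb1)/lt_le_trans/(_ (image_le z KJz)); rewrite ltxx.
have zm : abs (z - x0) <= m by have := filled_julia_sub_cdisk KJz; rewrite /cdisk /= mE.
have [y KJy zy] := exists_filled_julia_at_dist zm.
have := image_le y KJy; rewrite (abs_horner_fiber_far (x := z) fb size_bs).
  by rewrite (abs_distC habs) zy leNgt lt_abs_lead_expn.
move=> b /near; rewrite -ltNge [abs (b - z)](abs_distC habs).
by rewrite [abs (y - z)](abs_distC habs) zy.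
Qed.

End FixedPoint.

Theorem filled_julia_disk_structure :
  (forall x, KJ x -> disk_hull abs KJ = cdisk abs x (diam abs KJ)) /\
  (exists x, abs x = diam abs KJ) /\
  (rho <= diam abs KJ /\ (diam abs KJ = rho <-> KJ = disk_hull abs KJ)) /\
  (rho < diam abs KJ -> forall alpha, disk_hull abs KJ alpha ->
     KJ `<=` [set z | exists beta, root (f - alpha%:P) beta /\ abs (z - beta) <= rho]).
Proof.
have [x0 fix_x0] := exists_fixed_point.
have [gs size_gs fiber_gs] := fiber_seq_exists x0 (ltnW d_ge2) size_f.
have gs0 : gs != [::] by rewrite -size_eq0 size_gs -lt0n ltnW.
have [g0 g0_gs g0_max] := seq_max_attained (fun g => abs (g - x0)) gs0.
split; first exact: disk_hull_filled_julia fix_x0 fiber_gs size_gs g0_gs g0_max.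
split; first exact: exists_abs_eq_diam fix_x0 fiber_gs size_gs g0_gs g0_max.
split; first split.
- exact: rho_le_diam fix_x0 fiber_gs size_gs g0_gs g0_max.
- exact: diam_eq_rho_iff fix_x0 fiber_gs size_gs g0_gs g0_max.
exact: filled_julia_sub_fiber_disks fix_x0 fiber_gs size_gs g0_gs g0_max.
Qed.

End PolynomialDynamics.

Unset Implicit Arguments.

Theorem lemma3p4 (R : realType) (K : fieldType) (L : closedFieldType)
  (iota : {rmorphism K -> L}) (abs : L -> R)
  (habs : is_na_abs abs) (hcomp : abs_complete abs) (hdense : alg_dense iota abs)
  (phi : {poly K}) (d : nat) (hd : (2 <= d)%N) (hsz : size phi = d.+1) :
  let phiL := map_poly iota phi in
  let KJ := filled_julia abs phiL in
  let rv := diam abs KJ in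
  let U0 := disk_hull abs KJ in
  let rho := abs (iota (lead_coef phi)) `^ (- ((d - 1)%:R)^-1) in
  (forall x, KJ x -> U0 = cdisk abs x rv) /\
  (exists x, abs x = rv) /\
  (rho <= rv /\ (rv = rho <-> KJ = U0)) /\
  (rho < rv -> forall alpha, U0 alpha ->
     KJ `<=` [set z | exists beta, root (phiL - alpha%:P) beta /\ abs (z - beta) <= rho]).
Proof.
move=> phiL KJ rv U0 rho.
have size_phiL : size phiL = d.+1 by rewrite size_map_poly.
have lead_gt0 : 0 < abs (iota (lead_coef phi)).
  by rewrite -lead_coef_map (abs_gt0 habs) // lead_coef_eq0 -size_poly_eq0 size_phiL.
have rho_gt0 : 0 < rho by apply: powR_gt0.
have lead_rho : abs (lead_coef phiL) * rho ^+ (d - 1) = 1.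
  by rewrite lead_coef_map mul_powR_inv_expn // subn_gt0.
exact (filled_julia_disk_structure habs hd size_phiL rho_gt0 lead_rho).
Qed.
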